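(* Let $\pi$ be a permutation of $\{1,\dots,n\}$ and consider forkstack sorting with unlimited capacities ($s=t=\infty$). Then $\pi$ is not sortable if and only if every allowable sequence of moves after which the input stack is empty produces, at some moment, the dreaded 13 in the working stack.
   Context: Forkstack sorting with capacities $s,t\in\{1,2,3,\dots\}\cup\{\infty\}$: a permutation $\pi=\pi_1\pi_2\cdots\pi_n$ of $\{1,\dots,n\}$ is placed on an input stack with $\pi_1$ on top and $\pi_n$ at the bottom; a working stack and an output stack are initially empty. A move is either (i) remove the top $k$ elements of the input stack, $1\le k\le s$, and place them as a block, with their relative order unchanged, on top of the working stack; or (ii) remove the top $l$ elements of the working stack, $1\le l\le t$, and place them as a block, with relative order unchanged, on top of the output stack. $\pi$ is sortable if some finite sequence of moves ends with the input and working stacks empty and the output stack reading $1,2,\dots,n$ from top to bottom. A sequence of moves is allowable if, after performing it, the output stack read from top to bottom is $k,k+1,\dots,n$ for some $k$ (or is empty). The dreaded 13 occurs at a moment if the working stack then contains an element $a$ lying immediately above an element $b$ with $a<b-1$. *)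

From mathcomp Require Import all_boot.
Set Implicit Arguments. Unset Strict Implicit. Unset Printing Implicit Defensive.

(* Stacks are lists read from top (head) to bottom. *)
Record fstate := FState { inp : seq nat; work : seq nat; outp : seq nat }.

Inductive fmove := MoveIn of nat | MoveOut of nat.

Definition fstep (st : fstate) (m : fmove) : option fstate :=
  match m with
  | MoveIn k =>
      if (0 < k) && (k <= size (inp st)) then
        Some (FState (drop k (inp st)) (take k (inp st) ++ work st) (outp st))
      else None
  | MoveOut l =>
      if (0 < l) && (l <= size (work st)) then
        Some (FState (inp st) (drop l (work st)) (take l (work st) ++ outp st))
      else None
  end.

Fixpoint ftrace (st : fstate) (ms : seq fmove) : option (seq fstate) :=
  match ms with
  | [::] => Some [:: st]
  | m :: ms' =>
      match fstep st m with
      | Some st' => omap (cons st) (ftrace st' ms')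
      | None => None
      end
  end.

Definition finit (pi : seq nat) : fstate := FState pi [::] [::].

Definition fsortable (n : nat) (pi : seq nat) : Prop :=
  exists ms tr, ftrace (finit pi) ms = Some tr /\
    last (finit pi) tr = FState [::] [::] (iota 1 n).

Definition allowable_out (n : nat) (o : seq nat) : Prop :=
  exists k, 1 <= k <= n.+1 /\ o = iota k (n.+1 - k).

Definition dreaded13 (w : seq nat) : Prop :=
  exists i, i.+1 < size w /\ (nth 0 w i).+1 < nth 0 w i.+1.

From mathcomp Require Import all_boot.
From mathcomp Require Import zify.
Set Implicit Arguments. Unset Strict Implicit.

(* If a reachable state has empty input, allowable output
   k+1, ..., n and a working stack without a dreaded 13, that stack is a
   [no13]-chain of 1, ..., k whose top block down to the maximum k reads
   k-j, ..., k; popping such blocks sorts [pi]. Conversely, every state of a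
   sorting run is tidy: both stacks are [no13]-chains, and no output element
   [a] has a larger [b] in the working stack or above it in the output, as
   [b] would have to end up above [a]. Tidiness propagates backwards through
   moves and holds in the sorted state, so sorting runs never show a dreaded
   13. *)

Definition no13 : rel nat := fun a b => b <= a.+1.

Lemma dreaded13P w : dreaded13 w <-> ~~ sorted no13 w.
Proof.
split=> [[i [lt_i gap]] | ].
  by apply/(sortedP 0) => /(_ i lt_i); rewrite /no13 leqNgt gap.
elim: w => [|x [|y w] IH] //=; rewrite negb_and /no13 -ltnNge.
case/orP=> [gap | /IH [i [lt_i gap]]]; first by exists 0.
by exists i.+1.
Qed.

Definition fsorted_state n := FState [::] [::] (iota 1 n).

Lemma ftrace_head st ms tr : ftrace st ms = Some tr -> exists tr', tr = st :: tr'.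
Proof.
case: ms => [[<-] | m ms /=]; first by exists [::].
by case: (fstep st m) => // st'; case: (ftrace st' ms) => //= t [<-]; exists t.
Qed.

Lemma ftrace_cons st m ms tr :
  ftrace st (m :: ms) = Some tr -> exists st' tr',
    [/\ fstep st m = Some st', ftrace st' ms = Some tr', tr = st :: tr'
      & last st tr = last st' tr'].
Proof.
rewrite /=; case: (fstep st m) => // st'; case run: (ftrace st' ms) => [t|] //= [<-].
by have [t' eq_t] := ftrace_head run; exists st', t; split; rewrite // eq_t.
Qed.

Definition reachable st st' :=
  exists ms tr, ftrace st ms = Some tr /\ last st tr = st'.

Lemma reachable_refl st : reachable st st.
Proof. by exists [::], [:: st]. Qed.

Lemma reachable_cons st m st' st'' :
  fstep st m = Some st' -> reachable st' st'' -> reachable st st''.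
Proof.
move=> step [ms [tr [run <-]]]; have [tr' eq_tr] := ftrace_head run.
by exists (m :: ms), (st :: tr); rewrite /= step run eq_tr.
Qed.

Lemma reachable_trans st1 st2 st3 :
  reachable st1 st2 -> reachable st2 st3 -> reachable st1 st3.
Proof.
move=> [ms [tr [run <-]]]; elim: ms st1 tr run => [|m ms IH] st1 tr.
  by case=> <-.
case/ftrace_cons=> st' [tr' [step run' _ ->]] reach.
exact: reachable_cons step (IH _ _ run' reach).
Qed.

Definition fstate_items st := inp st ++ work st ++ outp st.

Lemma fstep_perm_eq st m st' :
  fstep st m = Some st' -> perm_eq (fstate_items st') (fstate_items st).
Proof.
case: st => i w o; case: m => k /=; case: ifP => // _ [<-]; rewrite /fstate_items /=.
  by rewrite -catA perm_catCA catA cat_take_drop.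
by rewrite perm_cat2l perm_catCA catA cat_take_drop.
Qed.

Lemma ftrace_perm_eq st ms tr :
  ftrace st ms = Some tr -> perm_eq (fstate_items (last st tr)) (fstate_items st).
Proof.
elim: ms st tr => [|m ms IH] st tr; first by case=> <-.
case/ftrace_cons=> st' [tr' [step run' _ ->]].
exact: perm_trans (IH _ _ run') (fstep_perm_eq step).
Qed.

(* Going up from the maximum [y], each element is at least its lower
   neighbour minus one, yet smaller since all larger values occur below. *)
Lemma sorted_no13_rcons_max s y :
  sorted no13 (rcons s y) -> uniq (rcons s y) -> all (ltn^~ y) s ->
  exists h, rcons s y = iota h (size s).+1.
Proof.
elim/last_ind: s y => [|s x IH] y; first by exists y.
have -> : rcons (rcons s x) y = s ++ [:: x; y] by rewrite -!cats1 -catA.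
rewrite sorted_cat_cons /= andbT /no13 => /andP [sorted_sx y_le].
rewrite cat_uniq /= orbF => /and4P [uniq_s /norP [x_notin_s _] _ _].
rewrite all_rcons => /andP [x_lt_y s_lt_y].
have y_eq : y = x.+1 by apply/eqP; rewrite eqn_leq y_le.
have s_lt_x : all (ltn^~ x) s.
  apply/allP => z z_s; move/allP/(_ z z_s): s_lt_y.
  by rewrite y_eq ltnS leq_eqVlt => /orP [/eqP eq_zx|//]; rewrite -eq_zx z_s in x_notin_s.
have uniq_sx : uniq (rcons s x) by rewrite rcons_uniq x_notin_s.
have [h eq_sx] := IH x sorted_sx uniq_sx s_lt_x.
have x_eq : x = h + size s.
  by have := congr1 (nth 0 ^~ (size s)) eq_sx; rewrite nth_rcons ltnn eqxx nth_iota.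
have iota_rcons m c : iota m c.+1 = rcons (iota m c) (m + c).
  by rewrite -addn1 iotaD cats1.
by exists h; rewrite size_rcons -cat_rcons eq_sx cats1 y_eq x_eq -addnS -iota_rcons.
Qed.

Lemma perm_eq_cat_iota_l w k n :
  k <= n -> perm_eq (w ++ iota k.+1 (n - k)) (iota 1 n) -> perm_eq w (iota 1 k).
Proof.
by move=> k_le_n; rewrite -{2}(subnKC k_le_n) iotaD add1n perm_cat2r.
Qed.

Lemma reachable_sorted_from_no13_work n k w :
  k <= n -> sorted no13 w -> perm_eq w (iota 1 k) ->
  reachable (FState [::] w (iota k.+1 (n - k))) (fsorted_state n).
Proof.
elim/ltn_ind: k w => -[|k] IH w k_le_n sorted_w perm_w.
  by rewrite (perm_small_eq _ perm_w) ?subn0 //; apply: reachable_refl.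
have k_in_w : k.+1 \in w by rewrite (perm_mem perm_w) mem_iota /=.
move: sorted_w perm_w; case/splitPr: k_in_w => s1 s2; rewrite -cat_rcons => sorted_w perm_w.
have uniq_run : uniq (rcons s1 k.+1).
  by move: (perm_uniq perm_w); rewrite iota_uniq cat_uniq => /and3P [].
have s1_lt : all (ltn^~ k.+1) s1.
  apply/allP => z z_s1.
  have : z \in iota 1 k.+1 by rewrite -(perm_mem perm_w) mem_cat mem_rcons inE z_s1 orbT.
  rewrite mem_iota add1n ltnS => /andP [_]; rewrite leq_eqVlt => /orP [/eqP eq_z|//].
  by move: uniq_run; rewrite rcons_uniq -eq_z z_s1.
have [h eq_run] := sorted_no13_rcons_max (prefix_sorted (prefix_prefix _ _) sorted_w)
  uniq_run s1_lt.
have top : h + size s1 = k.+1.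
  by have := congr1 (nth 0 ^~ (size s1)) eq_run; rewrite nth_rcons ltnn eqxx nth_iota.
have h_pos : 0 < h.
  have : h \in iota 1 k.+1.
    by rewrite -(perm_mem perm_w) eq_run mem_cat mem_iota leqnn addnS ltnS leq_addr.
  by rewrite mem_iota => /andP [].
set m := h.-1; have eq_h : h = m.+1 by rewrite /m prednK.
have eq_iota : iota 1 k.+1 = iota 1 m ++ iota h (size s1).+1.
  by rewrite eq_h -iotaD; congr iota; lia.
apply: (@reachable_cons _ (MoveOut (size s1).+1) (FState [::] s2 (iota m.+1 (n - m)))).
  rewrite /= eq_run size_cat size_iota leq_addr take_size_cat ?size_iota //.
  rewrite drop_size_cat ?size_iota // -eq_h.
  have -> : n - m = (size s1).+1 + (n - k.+1) by lia.
  by rewrite iotaD addnS top.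
apply: IH; [lia | lia | exact: suffix_sorted (suffix_suffix _ _) sorted_w |].
by move: perm_w; rewrite eq_run eq_iota perm_catC perm_cat2r.
Qed.

Lemma reachable_sorted_of_allowable n st :
  perm_eq (fstate_items st) (iota 1 n) -> inp st = [::] ->
  allowable_out n (outp st) -> sorted no13 (work st) ->
  reachable st (fsorted_state n).
Proof.
case: st => i w o /= perm_st eq_i [[|k] [/andP [_ k_le] eq_o]] // sorted_w.
subst i o; rewrite subSS in perm_st *.
apply: reachable_sorted_from_no13_work => //.
exact: perm_eq_cat_iota_l perm_st.
Qed.

Definition tidy st :=
  [/\ sorted no13 (work st), sorted no13 (outp st) &
      forall u v, outp st = u ++ v ->
        forall a b, a \in v -> b \in work st ++ u -> b <= a].

Lemma fstep_tidy st m st' : fstep st m = Some st' -> tidy st' -> tidy st.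
Proof.
case: st => i w o; case: m => l /=; case: ifP => // _ [<-] [/= sorted_w' sorted_o' below'].
  split=> //=; first exact: suffix_sorted (suffix_suffix _ _) sorted_w'.
  move=> u v eq_o a b a_v b_wu; apply: (below' _ _ eq_o a b a_v).
  by rewrite -catA mem_cat b_wu orbT.
have below_top a b : a \in take l w -> b \in drop l w -> b <= a.
  by move=> a_t b_d; apply: (below' [::] _ erefl); rewrite ?cats0 // mem_cat a_t.
split=> /=; last 2 first.
- exact: suffix_sorted (suffix_suffix _ _) sorted_o'.
- move=> u v eq_o a b a_v b_wu.
  apply: (below' (take l w ++ u) v _ a b a_v); first by rewrite eq_o catA.
  have /perm_mem -> : perm_eq (drop l w ++ take l w ++ u) (w ++ u).
    by rewrite catA perm_cat2r perm_catC cat_take_drop.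
  exact: b_wu.
have sorted_t := prefix_sorted (prefix_prefix _ _) sorted_o'.
rewrite -(cat_take_drop l w).
case: (take l w) sorted_t below_top => [|x t] //= sorted_t below_top.
rewrite cat_path sorted_t.
case: (drop l w) sorted_w' below_top => [|y d] //= sorted_d below_top.
by rewrite sorted_d andbT /no13 ltnW // ltnS below_top ?mem_last ?mem_head.
Qed.

Lemma tidy_fsorted_state n : tidy (fsorted_state n).
Proof.
split=> //=.
  apply/(sortedP 0) => i; rewrite size_iota => lt_i.
  by rewrite /no13 !nth_iota //; apply: ltnW.
move=> u v eq_iota a b a_v b_u.
have := iota_sorted 1 n; rewrite eq_iota (sorted_pairwise leq_trans) pairwise_cat.
by case/and3P => /allrelP le_uv _ _; apply: le_uv.
Qed.

Lemma ftrace_tidy st ms tr : ftrace st ms = Some tr -> tidy (last st tr) ->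
  forall i, i < size tr -> tidy (nth st tr i).
Proof.
elim: ms st tr => [|m ms IH] st tr; first by case=> <- tidy_st [].
case/ftrace_cons=> st' [tr' [step run' -> ->]] tidy_last [_ | i lt_i] /=.
  have [t' eq_t] := ftrace_head run'.
  by have := IH _ _ run' tidy_last 0; rewrite eq_t => /(_ erefl) /(fstep_tidy step).
by rewrite (set_nth_default st') //; apply: IH.
Qed.

Theorem proposition1 (n : nat) (pi : seq nat) :
  perm_eq pi (iota 1 n) ->
  (~ fsortable n pi <->
   forall (ms : seq fmove) (tr : seq fstate),
     ftrace (finit pi) ms = Some tr ->
     allowable_out n (outp (last (finit pi) tr)) ->
     inp (last (finit pi) tr) = [::] ->
     exists2 i, i < size tr & dreaded13 (work (nth (finit pi) tr i))).
Proof.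
move=> perm_pi; split=> [unsortable ms tr run out_ok inp_nil | all13 [ms [tr [run fin]]]].
  case sorted_w: (sorted no13 (work (last (finit pi) tr))).
    case: unsortable; apply: reachable_trans (reachable_sorted_of_allowable _ inp_nil out_ok sorted_w).
      by exists ms, tr.
    by apply: perm_trans (ftrace_perm_eq run) _; rewrite /fstate_items /= cats0.
  have [tr' eq_tr] := ftrace_head run.
  exists (size tr).-1; first by rewrite eq_tr.
  by rewrite nth_last; apply/dreaded13P; rewrite sorted_w.
have out_ok : allowable_out n (outp (last (finit pi) tr)) by rewrite fin; exists 1; rewrite subn1.
have inp_nil : inp (last (finit pi) tr) = [::] by rewrite fin.
have [i lt_i /dreaded13P] := all13 ms tr run out_ok inp_nil.
have tidy_last : tidy (last (finit pi) tr) by rewrite fin; apply: tidy_fsorted_state.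
by have [-> _ _] := ftrace_tidy run tidy_last lt_i.
Qed.
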